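(* Suppose Assumption 3.2(i) and Assumption 4.2 hold, and for each $r>0$ let $0<a_r<b_r<\infty$ be numbers as in Assumption 4.2. Then $\limsup_{r\downarrow0}b_r<\infty$.
   Context: Standing setup. $W$ is a standard one-dimensional Brownian motion. $\mu,\sigma:[0,\infty)\to\mathbb R$ are continuous with $\sigma(x)>0$ for $x>0$, such that the SDE $dX_0(s)=\mu(X_0(s))ds+\sigma(X_0(s))dW(s)$ has a weak solution unique in law with state space $[0,\infty)$, for which $0$ is an unattainable (entrance or natural) boundary point and $\infty$ is a natural boundary point. The generator is $\mathcal Lf(x)=\frac12\sigma^2(x)f''(x)+\mu(x)f'(x)$. Fix constants $0<c_1<c_2$ and a nonnegative continuous function $h$ on $[0,\infty)$. A control is an adapted càdlàg process $\varphi=\xi-\eta$, where $\xi,\eta$ are nonnegative, nondecreasing, càdlàg, $\xi(0-)=\eta(0-)=0$, and the measures $d\xi,d\eta$ are mutually singular; it is admissible if the controlled equation $dX(s)=\mu(X(s))ds+\sigma(X(s))dW(s)+d\xi(s)-d\eta(s)$, $X(0-)=x\ge0$, has a unique nonnegative weak solution $X$. For $x\ge0$, $\mathscr A_x$ is the set of admissible controls with $\mathbb E_x[\xi(T)]\le K_1(x)T^n+K_2(x)$ for all $T>0$, where $K_1,K_2$ are fixed positive functions and $n\ge1$ a fixed integer. Define $V_r(x)=\sup_{\varphi\in\mathscr A_x}\mathbb E_x\big[\int_0^\infty e^{-rs}(h(X(s))ds+c_1d\eta(s)-c_2d\xi(s))\big]$ for $r>0$. Assumption 3.2(i): $\lim_{x\downarrow0}[h(x)+c_2\mu(x)]\le0$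 and $\lim_{x\to\infty}[h(x)+c_1\mu(x)]<0$. Assumption 4.2: For each $r>0$ there exist $0<a_r<b_r<\infty$ such that $V_r\in C^2([0,\infty))$ and: for $x\in(a_r,b_r)$, $rV_r(x)-\mathcal LV_r(x)-h(x)=0$ and $c_1\le V_r'(x)\le c_2$; for $x\ge b_r$, $rV_r(x)-\mathcal LV_r(x)-h(x)\ge0$ and $V_r'(x)=c_1$; for $x\le a_r$, $rV_r(x)-\mathcal LV_r(x)-h(x)\ge0$ and $V_r'(x)=c_2$. *)

From Stdlib Require Import Reals.
From Coquelicot Require Import Coquelicot.
Open Scope R_scope.

Definition is_derive_nonneg (f f' : R -> R) : Prop :=
  (forall x, 0 < x -> is_derive f x (f' x)) /\
  filterlim (fun y => (f y - f 0) / (y - 0)) (at_right 0) (locally (f' 0)).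

Definition continuous_nonneg (f : R -> R) : Prop :=
  (forall x, 0 < x -> continuous f x) /\
  filterlim f (at_right 0) (locally (f 0)).

Definition C2_nonneg (f f1 f2 : R -> R) : Prop :=
  is_derive_nonneg f f1 /\ is_derive_nonneg f1 f2 /\ continuous_nonneg f2.

(* generator L f (x) = 1/2 sigma^2 f'' + mu f', written via f1 = f', f2 = f'' *)
Definition gen (mu sigma f1 f2 : R -> R) (x : R) : R :=
  / 2 * (sigma x) ^ 2 * f2 x + mu x * f1 x.

Definition assumption_4_2_at (mu sigma h : R -> R) (c1 c2 r : R)
    (V : R -> R) (a b : R) : Prop :=
  0 < a /\ a < b /\
  exists V1 V2 : R -> R,
    C2_nonneg V V1 V2 /\
    (forall x, a < x < b ->
        r * V x - gen mu sigma V1 V2 x - h x = 0 /\ c1 <= V1 x <= c2) /\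
    (forall x, b <= x ->
        r * V x - gen mu sigma V1 V2 x - h x >= 0 /\ V1 x = c1) /\
    (forall x, 0 <= x <= a ->
        r * V x - gen mu sigma V1 V2 x - h x >= 0 /\ V1 x = c2).

Definition assumption_3_2_i (mu h : R -> R) (c1 c2 : R) : Prop :=
  (exists l : Rbar, Rbar_le l 0 /\
     filterlim (fun x => h x + c2 * mu x) (at_right 0) (Rbar_locally l)) /\
  (exists l : Rbar, Rbar_lt l 0 /\
     filterlim (fun x => h x + c1 * mu x) (Rbar_locally p_infty) (Rbar_locally l)).

From Stdlib Require Import Reals Lra.
From Coquelicot Require Import Coquelicot.
Open Scope R_scope.

(* Fix r > 0 and write b = b_r.  On [b, oo) the value function
   has constant slope V' = c1, so V'' = 0 on (b, oo) and, by continuity of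
   V'', also V''(b) = 0.  The HJB equation r V - L V - h = 0 holds on (a, b)
   and, every term being continuous, it extends to b.  At b it therefore
   reads  r V(b) = h(b) + c1 mu(b).  Since V >= 0 this forces
   h(b) + c1 mu(b) >= 0, whereas by Assumption 3.2(i) this quantity is
   negative beyond some threshold M.  Hence b_r <= M for EVERY r > 0, which is
   stronger than the required bound on the limsup as r -> 0.
   The file first proves two facts about continuous functions (a value
   attained at nearby points is attained at the point, one-sided versions),
   then the two consequences of Assumption 4.2 at b (V''(b) = 0 and the
   equation at b), the eventual negativity from Assumption 3.2(i), and
   finally the theorem. *)

Lemma continuous_value_from_nearby (f : R -> R) (x0 c : R) :
  continuous f x0 ->
  (forall d, 0 < d -> exists x, Rabs (x - x0) < d /\ f x = c) ->
  f x0 = c.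
Proof.
  intros Hf Hnear.
  destruct (Req_dec (f x0) c) as [E | N]; [exact E | exfalso].
  assert (Heps : 0 < Rabs (f x0 - c) / 2).
  { assert (0 < Rabs (f x0 - c)) by (apply Rabs_pos_lt; lra). lra. }
  destruct (proj1 (filterlim_locally f (f x0)) Hf (mkposreal _ Heps)) as [d Hd].
  destruct (Hnear d (cond_pos d)) as [x [Hx Ex]].
  specialize (Hd x Hx).
  change (Rabs (f x - f x0) < Rabs (f x0 - c) / 2) in Hd.
  rewrite Ex, Rabs_minus_sym in Hd. lra.
Qed.

Lemma continuous_value_from_right (f : R -> R) (x0 e c : R) :
  0 < e -> continuous f x0 ->
  (forall x, x0 < x < x0 + e -> f x = c) -> f x0 = c.
Proof.
  intros He Hf Hc. apply (continuous_value_from_nearby f x0 c Hf).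
  intros d Hd. exists (x0 + Rmin d e / 2).
  assert (0 < Rmin d e) by (apply Rmin_pos; lra).
  pose proof (Rmin_l d e). pose proof (Rmin_r d e).
  split; [rewrite Rabs_right; lra | apply Hc; lra].
Qed.

Lemma continuous_value_from_left (f : R -> R) (x0 e c : R) :
  0 < e -> continuous f x0 ->
  (forall x, x0 - e < x < x0 -> f x = c) -> f x0 = c.
Proof.
  intros He Hf Hc. apply (continuous_value_from_nearby f x0 c Hf).
  intros d Hd. exists (x0 - Rmin d e / 2).
  assert (0 < Rmin d e) by (apply Rmin_pos; lra).
  pose proof (Rmin_l d e). pose proof (Rmin_r d e).
  split; [rewrite Rabs_left; lra | apply Hc; lra].
Qed.

Lemma derive_zero_right_of_const (f f' : R -> R) (b c : R) :
  (forall x, b < x -> is_derive f x (f' x)) ->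
  (forall x, b <= x -> f x = c) ->
  forall x, b < x -> f' x = 0.
Proof.
  intros Hd Hc x Hx.
  assert (Hconst : is_derive (fun _ => c) x (f' x)).
  { apply (is_derive_ext_loc f); [| now apply Hd].
    assert (Hp : 0 < x - b) by lra. exists (mkposreal _ Hp).
    intros t Ht. change (Rabs (t - x) < x - b) in Ht.
    apply Rabs_def2 in Ht. apply Hc. lra. }
  rewrite <- (is_derive_unique _ _ _ Hconst).
  apply is_derive_unique, (@is_derive_const R_AbsRing R_NormedModule).
Qed.

Lemma continuous_of_is_derive (f : R -> R) (x l : R) :
  is_derive f x l -> continuous f x.
Proof.
  intros Hd. apply (@ex_derive_continuous R_AbsRing R_NormedModule).
  now exists l.
Qed.

Lemma hjb_residual_continuous (mu sigma h V V1 V2 : R -> R) (r x : R) :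
  continuous mu x -> continuous sigma x -> continuous h x ->
  continuous V x -> continuous V1 x -> continuous V2 x ->
  continuous (fun y => r * V y - gen mu sigma V1 V2 y - h y) x.
Proof.
  intros Cmu Csig Ch CV CV1 CV2. unfold gen.
  apply (continuous_minus (fun y => _ - _) h); [| exact Ch].
  apply (continuous_minus (fun y => r * V y)).
  - apply (continuous_mult (fun _ => r) V); [apply continuous_const | exact CV].
  - apply (continuous_plus (fun y => _ * V2 y) (fun y => mu y * V1 y)).
    + apply (continuous_mult (fun y => / 2 * sigma y ^ 2) V2); [| exact CV2].
      apply (continuous_mult (fun _ => / 2) (fun y => sigma y ^ 2));
        [apply continuous_const |].
      simpl. apply (continuous_mult sigma (fun y => sigma y * 1)); [exact Csig |].
      apply (continuous_mult sigma (fun _ => 1)); [exact Csig | apply continuous_const].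
    + now apply (continuous_mult mu V1).
Qed.

Lemma hjb_at_upper_threshold (mu sigma h : R -> R) (c1 c2 r : R)
    (V : R -> R) (a b : R) :
  continuous_nonneg mu -> continuous_nonneg sigma -> continuous_nonneg h ->
  assumption_4_2_at mu sigma h c1 c2 r V a b ->
  r * V b = h b + c1 * mu b.
Proof.
  intros [Cmu _] [Csig _] [Ch _]
         [Ha [Hab [V1 [V2 [[[DV _] [[DV1 _] [CV2 _]]] [Hin [Hge _]]]]]]].
  assert (Hb : 0 < b) by lra.
  assert (Hslope : V1 b = c1) by apply (Hge b (Rle_refl b)).
  assert (Hcurv : V2 b = 0).
  { apply (continuous_value_from_right V2 b 1); [lra | apply CV2; lra |].
    intros x Hx. apply (derive_zero_right_of_const V1 V2 b c1); [| | lra].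
    - intros y Hy. apply DV1. lra.
    - intros y Hy. apply (Hge y Hy). }
  assert (Hhjb : r * V b - gen mu sigma V1 V2 b - h b = 0).
  { apply (continuous_value_from_left
             (fun y => r * V y - gen mu sigma V1 V2 y - h y) b (b - a));
      [lra | |].
    - apply hjb_residual_continuous.
      + now apply Cmu.
      + now apply Csig.
      + now apply Ch.
      + exact (continuous_of_is_derive _ _ _ (DV b Hb)).
      + exact (continuous_of_is_derive _ _ _ (DV1 b Hb)).
      + now apply CV2.
    - intros x Hx. apply (Hin x). lra. }
  unfold gen in Hhjb. rewrite Hcurv, Hslope in Hhjb. lra.
Qed.

Lemma eventually_neg_of_neg_limit (f : R -> R) (l : Rbar) :
  Rbar_lt l 0 -> filterlim f (Rbar_locally p_infty) (Rbar_locally l) ->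
  exists M, forall x, M < x -> f x < 0.
Proof.
  intros Hl Hlim. destruct l as [l | |]; simpl in Hl; try contradiction.
  - assert (Hp : 0 < - l / 2) by lra.
    destruct (Hlim (fun y => Rabs (y - l) < - l / 2)) as [M HM].
    { now exists (mkposreal _ Hp). }
    exists M. intros x Hx. specialize (HM x Hx). apply Rabs_def2 in HM. lra.
  - destruct (Hlim (fun y => y < 0)) as [M HM]; [now exists 0 |].
    now exists M.
Qed.

Theorem lemma4p6 (mu sigma h : R -> R) (c1 c2 : R) (V : R -> R -> R) (a b : R -> R) :
  continuous_nonneg mu -> continuous_nonneg sigma ->
  (forall x, 0 < x -> 0 < sigma x) ->
  continuous_nonneg h -> (forall x, 0 <= x -> 0 <= h x) ->
  0 < c1 -> c1 < c2 ->
  (forall r x, 0 < r -> 0 <= x -> 0 <= V r x) ->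
  assumption_3_2_i mu h c1 c2 ->
  (forall r, 0 < r -> assumption_4_2_at mu sigma h c1 c2 r (V r) (a r) (b r)) ->
  exists M delta, 0 < delta /\ forall r, 0 < r < delta -> b r <= M.
Proof.
  intros Cmu Csig _ Ch _ _ _ Vnonneg [_ [l [Hl Hlim]]] H42.
  destruct (eventually_neg_of_neg_limit _ l Hl Hlim) as [M HM].
  (* b_r <= M for every r > 0; the choice delta = 1 is immaterial. *)
  exists M, 1. split; [lra |]. intros r [Hr _].
  assert (Hb : 0 < b r) by (destruct (H42 r Hr) as [Ha [Hab _]]; lra).
  pose proof (hjb_at_upper_threshold mu sigma h c1 c2 r (V r) (a r) (b r)
                Cmu Csig Ch (H42 r Hr)) as Hid.
  pose proof (Vnonneg r (b r) Hr (Rlt_le _ _ Hb)).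
  destruct (Rle_or_lt (b r) M) as [Hle | Hgt]; [exact Hle | exfalso].
  specialize (HM (b r) Hgt). nra.
Qed.
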